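(* Let $A=\mathbb{C}[x,y,z]$ and let $F=(f,g,h)\in A^3$ be a Poisson triple on $A$. Then $F$ is cm-exact: there exist a maximal ideal $M$ of $A$ and elements $a,b\in\widehat A$ (the $M$-adic completion of $A$) such that $F=b\,\mathrm{grad}(a)$, i.e. $f=b\,\partial a/\partial x$, $g=b\,\partial a/\partial y$, $h=b\,\partial a/\partial z$.
   Context: For a commutative $\mathbb{C}$-algebra $B\in\{A,\widehat A\}$ and $F=(f,g,h)\in B^3$, $F$ is called a Poisson triple on $B$ if there is a Poisson bracket $\{-,-\}$ on $B$ (a Lie bracket such that each $\{b,-\}$ is a $\mathbb{C}$-derivation) with $\{y,z\}=f$, $\{z,x\}=g$, $\{x,y\}=h$. The partial derivatives $\partial/\partial x,\partial/\partial y,\partial/\partial z$ of $A$ extend uniquely to continuous derivations of $\widehat A$, and $\mathrm{grad}(a)=(\partial a/\partial x,\partial a/\partial y,\partial a/\partial z)$. *)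

From HB Require Import structures.
From mathcomp Require Import all_boot all_order all_algebra.
From mathcomp Require Import reals complex.
From mathcomp Require Import mpoly.

Set Implicit Arguments.
Unset Strict Implicit.
Unset Printing Implicit Defensive.
Import GRing.Theory Num.Theory.
Local Open Scope ring_scope.

(* The complex numbers: C = R[i] for R the (unique up to isomorphism)
   complete archimedean ordered field, given as an abstract realType. *)
Definition CC (R : realType) := R[i].

Definition polyA (R : realType) := {mpoly (CC R)[3]}.

Section Defs.
Variable R : realType.
Local Notation A := (polyA R).

Definition xA : A := 'X_(0 : 'I_3).
Definition yA : A := 'X_(1 : 'I_3).
Definition zA : A := 'X_(2 : 'I_3).

Definition is_lie_bracket (br : A -> A -> A) : Prop :=
  [/\ (forall (c : CC R) (a b d : A), br (c *: a + b) d = c *: br a d + br b d),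
      (forall (c : CC R) (a b d : A), br d (c *: a + b) = c *: br d a + br d b),
      (forall a : A, br a a = 0) &
      (forall a b d : A, br a (br b d) + br b (br d a) + br d (br a b) = 0)].

Definition is_derivation_bracket (br : A -> A -> A) : Prop :=
  forall b : A,
    (forall (c : CC R) (u v : A), br b (c *: u + v) = c *: br b u + br b v) /\
    (forall u v : A, br b (u * v) = br b u * v + u * br b v).

Definition is_poisson_bracket (br : A -> A -> A) : Prop :=
  is_lie_bracket br /\ is_derivation_bracket br.

Definition poisson_triple (f g h : A) : Prop :=
  exists br : A -> A -> A, is_poisson_bracket br /\
    [/\ br yA zA = f, br zA xA = g & br xA yA = h].

Definition is_ideal (I : A -> Prop) : Prop :=
  [/\ I 0,
      (forall u v, I u -> I v -> I (u + v)) &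
      (forall r u, I u -> I (r * u))].

Definition is_maximal_ideal (M : A -> Prop) : Prop :=
  [/\ is_ideal M, ~ M 1 &
      forall J : A -> Prop, is_ideal J -> (forall u, M u -> J u) ->
        (forall u, J u <-> M u) \/ J 1].

Definition ideal_mul (I J : A -> Prop) : A -> Prop :=
  fun p => exists s : seq (A * A),
    (forall uv, uv \in s -> I uv.1 /\ J uv.2) /\
    p = \sum_(uv <- s) (uv.1 * uv.2).

Fixpoint ideal_pow (M : A -> Prop) (n : nat) : A -> Prop :=
  match n with
  | 0 => fun _ => True
  | n'.+1 => ideal_mul M (ideal_pow M n')
  end.

(* ---------- M-adic completion of A ----------
   An element of the completion  \hat A = lim_n A / M^n  is represented by a
   compatible sequence of lifts (a_n)_n, a_(n+1) = a_n mod M^n; two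
   representatives define the same element iff a_n = b_n mod M^n for all n. *)
Definition compl_elt (M : A -> Prop) (a : nat -> A) : Prop :=
  forall n, ideal_pow M n (a n.+1 - a n).

Definition compl_eq (M : A -> Prop) (a b : nat -> A) : Prop :=
  forall n, ideal_pow M n (a n - b n).

Definition compl_of (p : A) : nat -> A := fun _ => p.

Definition compl_mul (a b : nat -> A) : nat -> A := fun n => a n * b n.

(* continuous extension of d/dx_i to \hat A; the shift makes it well
   defined, since d(M^(n+1)) is contained in M^n *)
Definition compl_deriv (i : 'I_3) (a : nat -> A) : nat -> A :=
  fun n => mderiv i (a n.+1).

Definition cm_exact (f g h : A) : Prop :=
  exists M : A -> Prop, is_maximal_ideal M /\
  exists a b : nat -> A, [/\ compl_elt M a, compl_elt M b,
    compl_eq M (compl_of f) (compl_mul b (compl_deriv 0 a)),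
    compl_eq M (compl_of g) (compl_mul b (compl_deriv 1 a)) &
    compl_eq M (compl_of h) (compl_mul b (compl_deriv 2 a))].

End Defs.

From HB Require Import structures.
From mathcomp Require Import all_boot all_order all_algebra.
From mathcomp Require Import reals complex.
From mathcomp Require Import mpoly.
From mathcomp Require Import ring.
From Stdlib Require Import Classical_Prop.

Set Implicit Arguments.
Unset Strict Implicit.
Unset Printing Implicit Defensive.
Import GRing.Theory Num.Theory.
Local Open Scope ring_scope.

(* The Jacobi identity for x, y, z says that F = (f, g, h) satisfies
   F . curl F = 0.  Pick a point p where some component, say h, does not
   vanish.  In the completion at p, h is a unit, and the derivations
   L_x = d/dx - (f/h) d/dz and L_y = d/dy - (g/h) d/dz commute, since
   [L_y, L_x] = (F . curl F)/h^2 d/dz.  Hence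
     a = sum_(m,n) (p_x - x)^m/m! (p_y - y)^n/n! L_x^m L_y^n (z - p_z)
   is a common first integral: L_x a = L_y a = 0 and da/dz = 1 mod M, so
   b = h / (da/dz) gives F = b grad a.  At level n of the completion the
   series are truncated, and 1/h and 1/(da/dz) become truncated geometric
   series. *)

Definition geom_inv (T : comNzRingType) (n : nat) (u : T) : T :=
  \sum_(t < n) (1 - u) ^+ t.

Lemma geom_invE (T : comNzRingType) n (u : T) :
  1 - u * geom_inv n u = (1 - u) ^+ n.
Proof.
have -> : u * geom_inv n u = - (((1 - u) - 1) * geom_inv n u) by ring.
by rewrite /geom_inv -subrX1; ring.
Qed.

Section IdealPow.
Variable R : realType.
Local Notation A := (polyA R).
Variable M : A -> Prop.
Hypothesis M_ideal : is_ideal M.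
Local Notation P := (ideal_pow M).

Lemma ideal_pow_ideal n : is_ideal (P n).
Proof.
elim: n => [|n [_ _ IHM]] /=; first by split.
split.
- by exists [::]; split => //; rewrite big_nil.
- move=> u v [s [Hs ->]] [t [Ht ->]]; exists (s ++ t); split; last by rewrite big_cat.
  by move=> uv; rewrite mem_cat => /orP [/Hs|/Ht].
- move=> r u [s [Hs ->]]; exists [seq (uv.1, r * uv.2) | uv <- s]; split.
    by move=> uv /mapP [w /Hs [H1 H2] ->] /=; split => //; apply: IHM.
  by rewrite big_map mulr_sumr; apply: eq_bigr => uv _ /=; rewrite mulrCA.
Qed.

Lemma ideal_pow0 n : P n 0. Proof. by case: (ideal_pow_ideal n). Qed.

Lemma ideal_powD n u v : P n u -> P n v -> P n (u + v).
Proof. by case: (ideal_pow_ideal n) => _ H _; apply: H. Qed.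

Lemma ideal_powMl n r u : P n u -> P n (r * u).
Proof. by case: (ideal_pow_ideal n) => _ _ H; apply: H. Qed.

Lemma ideal_powMr n r u : P n u -> P n (u * r).
Proof. by rewrite mulrC; apply: ideal_powMl. Qed.

Lemma ideal_powN n u : P n u -> P n (- u).
Proof. by move=> H; rewrite -mulN1r; apply: ideal_powMl. Qed.

Lemma ideal_powB n u v : P n u -> P n v -> P n (u - v).
Proof. by move=> Hu Hv; apply: ideal_powD Hu (ideal_powN Hv). Qed.

Lemma ideal_powZ n (c : CC R) u : P n u -> P n (c *: u).
Proof. by move=> H; rewrite -mul_mpolyC; apply: ideal_powMl. Qed.

Lemma ideal_pow_sum n (I : eqType) (r : seq I) (F : I -> A) :
  (forall i, i \in r -> P n (F i)) -> P n (\sum_(i <- r) F i).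
Proof.
elim: r => [|x r IH] H; first by rewrite big_nil; apply: ideal_pow0.
rewrite big_cons; apply: ideal_powD; first by apply: H; rewrite inE eqxx.
by apply: IH => i Hi; apply: H; rewrite inE Hi orbT.
Qed.

Lemma ideal_pow_mulS n m u : M m -> P n u -> P n.+1 (m * u).
Proof.
move=> Hm Hu; exists [:: (m, u)]; split; last by rewrite big_seq1.
by move=> uv; rewrite inE => /eqP ->.
Qed.

Lemma ideal_pow1 u : P 1 u <-> M u.
Proof.
split; last by move=> H; rewrite -[u]mulr1; apply: ideal_pow_mulS.
case: M_ideal => M0 MD MM [s [Hs ->]].
rewrite big_seq; elim/big_rec: _ => // uv x /Hs [H1 _] Hx.
by apply: MD => //; rewrite mulrC; apply: MM.
Qed.

Lemma ideal_powSW n u : P n.+1 u -> P n u.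
Proof.
elim: n u => [//|n IH] u [s [Hs ->]].
apply: ideal_pow_sum => uv /Hs [H1 H2].
by apply: ideal_pow_mulS H1 (IH _ H2).
Qed.

Lemma ideal_pow_leW n m u : (m <= n)%N -> P n u -> P m u.
Proof.
move=> /subnK <-; elim: (n - m)%N => [//|t IH] H.
by apply: IH; apply: ideal_powSW; rewrite -addSn.
Qed.

Lemma ideal_powM a b u w : P a u -> P b w -> P (a + b) (u * w).
Proof.
elim: a u => [|a IH] u; first by move=> _ Hw; rewrite add0n; apply: ideal_powMl.
move=> [s [Hs ->]] Hw; rewrite addSn mulr_suml.
apply: ideal_pow_sum => uv /Hs [H1 H2].
by rewrite -mulrA; apply: ideal_pow_mulS H1 (IH _ H2 Hw).
Qed.

Lemma ideal_pow_exp n m : M m -> P n (m ^+ n).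
Proof. by move=> Hm; elim: n => [//|n IH]; rewrite exprS; apply: ideal_pow_mulS. Qed.

Lemma ideal_pow_derivation (D : A -> A) :
    (forall u v, D (u + v) = D u + D v) ->
    (forall u v, D (u * v) = D u * v + u * D v) ->
  forall n u, P n.+1 u -> P n (D u).
Proof.
move=> DD DM; have D0 : D 0 = 0 by apply: (addrI (D 0)); rewrite -DD !addr0.
elim=> [//|n IH] u [s [Hs ->]].
rewrite big_seq; elim/big_rec: _ => [|uv x /Hs [H1 H2] Hx].
  by rewrite D0; apply: ideal_pow0.
rewrite DD DM; apply: (ideal_powD _ Hx); apply: ideal_powD.
  exact: (@ideal_powMl n.+1 (D uv.1) uv.2 H2).
by apply: ideal_pow_mulS H1 (IH _ H2).
Qed.

Lemma ideal_pow_mderiv l n u : P n.+1 u -> P n (mderiv l u).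
Proof. by apply: ideal_pow_derivation; [apply: mderivD | apply: mderivM]. Qed.

Lemma ideal_pow_geom_inv n u : M (1 - u) -> P n (1 - u * geom_inv n u).
Proof. by rewrite geom_invE; apply: ideal_pow_exp. Qed.

End IdealPow.

Definition point_ideal (R : realType) (v : 'I_3 -> CC R) : polyA R -> Prop :=
  fun p => p.@[v] = 0.

Lemma point_ideal_ideal (R : realType) (v : 'I_3 -> CC R) : is_ideal (point_ideal v).
Proof.
rewrite /point_ideal; split; first by rewrite meval0.
  by move=> u w Hu Hw; rewrite mevalD Hu Hw addr0.
by move=> r u Hu; rewrite mevalM Hu mulr0.
Qed.

Lemma point_ideal_maximal (R : realType) (v : 'I_3 -> CC R) :
  is_maximal_ideal (point_ideal v).
Proof.
split; first exact: point_ideal_ideal.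
  by rewrite /point_ideal meval1; apply/eqP; rewrite oner_eq0.
move=> J [J0 JD JM] MJ.
case: (classic (exists u, J u /\ u.@[v] != 0)) => [[u [Ju Hu]]|H]; [right|left].
  have J_const : J (u.@[v])%:MP.
    have -> : (u.@[v])%:MP = u + (-1) * (u - (u.@[v])%:MP).
      by rewrite mulN1r opprB addrC subrK.
    apply: JD => //; apply: JM; apply: MJ.
    by rewrite /point_ideal mevalB mevalC subrr.
  have -> : (1 : polyA R) = ((u.@[v])^-1)%:MP * (u.@[v])%:MP.
    by rewrite -mpolyCM mulVf.
  exact: JM.
move=> u; split; last exact: MJ.
by move=> Ju; apply/eqP; apply: contra_notT H => Hu; exists u.
Qed.

Lemma mderivXU (K : comNzRingType) (n : nat) (i l : 'I_n) :
  ('X_i : {mpoly K[n]})^`M(l) = (i == l)%:R.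
Proof.
rewrite mderivX mnm1E; case: eqP => [->|_]; last by rewrite scale0r.
have -> : (U_(l) - U_(l) = 0)%MM by apply/mnmP => j; rewrite !mnmE subnn.
by rewrite mpolyX0 scale1r.
Qed.

Section DerivationChainRule.
Variables (K : comNzRingType) (n : nat).
Local Notation A := {mpoly K[n]}.
Variable D : A -> A.
Hypothesis D_linear : forall (c : K) (u v : A), D (c *: u + v) = c *: D u + D v.
Hypothesis D_Leibniz : forall u v : A, D (u * v) = D u * v + u * D v.

Let chain (q : A) : A := \sum_(i < n) q^`M(i) * D 'X_i.

Let chainM u v : chain (u * v) = chain u * v + u * chain v.
Proof.
rewrite /chain mulr_suml mulr_sumr -big_split /=.
by apply: eq_bigr => i _; rewrite mderivM; ring.
Qed.

Let chainX i : chain 'X_i = D 'X_i.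
Proof.
rewrite /chain (bigD1 i) //= big1 ?addr0 => [|j ji]; first by rewrite mderivXU eqxx mul1r.
by rewrite mderivXU eq_sym (negbTE ji) mul0r.
Qed.

Lemma derivation_chain_rule q : D q = \sum_(i < n) q^`M(i) * D 'X_i.
Proof.
have D0 : D 0 = 0.
  by apply: (addrI (D 0)); rewrite -[X in X + _]scale1r -D_linear scale1r !addr0.
have D1 : D 1 = 0.
  have := D_Leibniz 1 1; rewrite !mulr1 mul1r => H.
  by apply: (addrI (D 1)); rewrite -H addr0.
pose S q := D q = chain q.
have SM u v : S u -> S v -> S (u * v) by rewrite /S chainM D_Leibniz => -> ->.
have S1 : S 1 by rewrite /S D1 /chain big1 // => i _; rewrite -mpolyC1 mderivC mul0r.
have SX m : S 'X_[m].
  rewrite mpolyXE_id; elim/big_ind: _ => //= i _.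
  elim: (m i) => [|t IH]; first by rewrite expr0.
  by rewrite exprS; apply: SM => //; rewrite /S chainX.
elim/mpolyind: q => [|c m p _ _ Hp].
  by rewrite D0 big1 // => i _; rewrite mderiv0 mul0r.
rewrite D_linear Hp (SX m) /chain scaler_sumr -big_split /=.
by apply: eq_bigr => i _; rewrite mderivD mderivZ mulrDl scalerAl.
Qed.

End DerivationChainRule.

Section Integrability.
Variable R : realType.
Local Notation A := (polyA R).

Definition integrable (i j k : 'I_3) (f g h : A) : Prop :=
  f * (h^`M(j) - g^`M(k)) + g * (f^`M(k) - h^`M(i)) + h * (g^`M(i) - f^`M(j)) = 0.

Lemma integrable_rot i j k f g h : integrable i j k f g h -> integrable j k i g h f.
Proof. by rewrite /integrable => F_int; rewrite -[RHS]F_int; ring. Qed.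

Lemma poisson_triple_integrable f g h : poisson_triple f g h -> integrable 0 1 2 f g h.
Proof.
move=> [br [[[linl linr alt jacobi] der] [Hf Hg Hh]]].
have br_chain b q : br b q = \sum_(l < 3) q^`M(l) * br b 'X_l.
  by case: (der b) => Dl DM; apply: derivation_chain_rule.
have br_anti a b : br a b = - br b a.
  have E1 := linl 1 a b (a + b); have E2 := linr 1 a b a; have E3 := linr 1 a b b.
  rewrite !scale1r in E1 E2 E3.
  have := alt (a + b); rewrite E1 E2 E3 !alt add0r addr0.
  by move/eqP; rewrite addr_eq0 => /eqP.
have := jacobi (xA R) (yA R) (zA R).
rewrite Hf Hg Hh (br_chain _ f) (br_chain _ g) (br_chain _ h).
rewrite !big_ord_recl !big_ord0 !addr0.
have -> : ord0 = 0 :> 'I_3 by apply: val_inj.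
have -> : lift ord0 ord0 = 1 :> 'I_3 by apply: val_inj.
have -> : lift ord0 (lift ord0 ord0) = 2 :> 'I_3 by apply: val_inj.
rewrite -/(xA R) -/(yA R) -/(zA R) !alt.
rewrite (br_anti (yA R) (xA R)) (br_anti (zA R) (yA R)) (br_anti (xA R) (zA R)) Hf Hg Hh.
by move=> H; rewrite /integrable -[RHS]oppr0 -H; ring.
Qed.

End Integrability.

Lemma poly_nonroot_exists (F : numDomainType) (Q : {poly F}) :
  Q != 0 -> exists t, ~~ root Q t.
Proof.
move=> Q0; pose rs := [seq (i%:R : F) | i <- iota 0 (size Q)].
have [rs_roots|] := boolP (all (root Q) rs); last by case/allPn => t _; exists t.
have rs_uniq : uniq rs.
  by rewrite map_inj_uniq ?iota_uniq // => a b /eqP; rewrite eqr_nat => /eqP.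
by have := max_poly_roots Q0 rs_roots rs_uniq; rewrite size_map size_iota ltnn.
Qed.

Lemma radix_digit_inj (D a b x y : nat) : (a < D)%N -> (b < D)%N ->
  (a + D * x = b + D * y)%N -> a = b /\ x = y.
Proof.
move=> aD bD E; have D0 : (0 < D)%N by apply: leq_ltn_trans aD.
have E' : (x * D + a = y * D + b)%N by rewrite addnC mulnC E addnC mulnC.
have := congr1 (modn^~ D) E'; rewrite !modnMDl !modn_small //.
have := congr1 (divn^~ D) E'; rewrite !divnMDl // !divn_small // !addn0.
by move=> -> ->.
Qed.

(* Kronecker substitution: all exponents of p are < D, so x_i |-> t ^+ D ^ i
   keeps distinct monomials of p distinct. *)
Lemma mpoly_nonvanishing_point (F : numDomainType) (p : {mpoly F[3]}) :
  p != 0 -> exists v : 'I_3 -> F, p.@[v] != 0.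
Proof.
move=> p0; pose D := msize p.
pose e (m : 'X_{1..3}) :=
  (m ord0 + D * (m (lift ord0 ord0) + D * m (lift ord0 (lift ord0 ord0))))%N.
have small m : m \in msupp p -> forall i, (m i < D)%N.
  move=> Hm i; apply: leq_ltn_trans (msize_mdeg_lt Hm).
  by rewrite mdegE (bigD1 i) //= leq_addr.
have e_inj m m' : m \in msupp p -> m' \in msupp p -> e m = e m' -> m = m'.
  move=> Hm Hm' E.
  have [E0 E12] := radix_digit_inj (small _ Hm ord0) (small _ Hm' ord0) E.
  have [E1 E2] := radix_digit_inj (small _ Hm _) (small _ Hm' _) E12.
  apply/mnmP => i.
  have : i = ord0 \/ i = lift ord0 ord0 \/ i = lift ord0 (lift ord0 ord0).
    case: i => [[|[|[|?]]] ?] //; [left | right; left | right; right]; exact: val_inj.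
  by case=> [->|[->|->]].
pose Q : {poly F} := \sum_(m <- msupp p) p@_m *: 'X^(e m).
have Q0 : Q != 0.
  apply/eqP => /(congr1 (fun q : {poly F} => q`_(e (mlead p)))).
  rewrite coef0 /Q coef_sum (bigD1_seq (mlead p)) ?msupp_uniq ?mlead_supp //=.
  rewrite coefZ coefXn eqxx mulr1 big1_seq ?addr0.
    by move/eqP; rewrite mleadc_eq0 (negbTE p0).
  move=> m /andP [Hne Hm]; rewrite coefZ coefXn.
  case: eqP => [/e_inj E|]; last by rewrite mulr0.
  by move: Hne; rewrite E ?eqxx ?mlead_supp.
have [t Ht] := poly_nonroot_exists Q0.
exists (fun i : 'I_3 => t ^+ (D ^ i)).
apply: contra Ht => /eqP H; apply/eqP; rewrite -H mevalE /Q horner_sum.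
apply: eq_bigr => m _; rewrite hornerZ hornerXn; congr (_ * _).
rewrite !big_ord_recl big_ord0 mulr1 /= -!exprM -!exprD.
congr (_ ^+ _); rewrite /e /= expn0 expn1 mul1n.
by rewrite /bump /= add1n expnS expn1 mulnDr mulnA.
Qed.

Section DerivAlong.
Variable R : realType.
Local Notation A := (polyA R).

Definition deriv_along (l k : 'I_3) (al q : A) : A := q^`M(l) - al * q^`M(k).

Variables (l k : 'I_3) (al : A).
Local Notation L := (deriv_along l k al).

Lemma deriv_alongD u w : L (u + w) = L u + L w.
Proof. by rewrite /deriv_along !mderivD; ring. Qed.

Lemma deriv_alongB u w : L (u - w) = L u - L w.
Proof. by rewrite /deriv_along !mderivB; ring. Qed.

Lemma deriv_alongM u w : L (u * w) = L u * w + u * L w.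
Proof. by rewrite /deriv_along !mderivM; ring. Qed.

Lemma deriv_alongZ (c : CC R) u : L (c *: u) = c *: L u.
Proof. by rewrite /deriv_along !mderivZ scalerBr scalerAr. Qed.

Lemma deriv_along_sum (I : Type) (r : seq I) (F : I -> A) :
  L (\sum_(x <- r) F x) = \sum_(x <- r) L (F x).
Proof.
elim/big_rec2: _ => [|x y1 y2 _ <-]; last by rewrite deriv_alongD.
by rewrite /deriv_along !mderiv0 mulr0 subr0.
Qed.

Lemma deriv_along_expS (x : A) m : L (x ^+ m.+1) = m.+1%:R * x ^+ m * L x.
Proof.
elim: m => [|m IH]; first by rewrite expr1 expr0 mulr1 mul1r.
by rewrite exprS deriv_alongM IH -(addn1 m.+1) natrD exprS; ring.
Qed.

Lemma deriv_along_exp0 (x : A) n : L x = 0 -> L (x ^+ n) = 0.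
Proof.
case: n => [|n] Lx; last by rewrite deriv_along_expS Lx mulr0.
by rewrite expr0 /deriv_along -mpolyC1 !mderivC mulr0 subrr.
Qed.

Lemma deriv_along_ideal_pow (M : A -> Prop) n u :
  ideal_pow M n u -> ideal_pow M (n - 1) (L u).
Proof.
case: n => [//|n] H; rewrite subn1 /=.
by apply: ideal_powB; [|apply: ideal_powMl]; apply: ideal_pow_mderiv.
Qed.


Definition invfact (m : nat) : CC R := (m`!%:R)^-1.

Lemma invfact0 : invfact 0 = 1.
Proof. by rewrite /invfact fact0 invr1. Qed.

Lemma invfactS m : invfact m.+1 * m.+1%:R = invfact m.
Proof. by rewrite /invfact factS natrM invfM mulrAC mulVf ?mul1r // pnatr_eq0. Qed.

(* With L x = -1, the series sum_m x^m/m! F m is annihilated by L up to its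
   last term, provided F m.+1 = L (F m); the defects are kept explicit. *)
Lemma deriv_along_taylor (x : A) (F : nat -> A) N : L x = -1 ->
  \sum_(m < N.+1) L (invfact m *: x ^+ m * F m) =
  invfact N *: x ^+ N * F N.+1
  + \sum_(m < N.+1) invfact m *: x ^+ m * (L (F m) - F m.+1).
Proof.
move=> Lx; elim: N => [|N IH].
  by rewrite !big_ord_recr !big_ord0 /= !add0r invfact0 !scale1r expr0 !mul1r; ring.
rewrite big_ord_recr /= IH [in RHS]big_ord_recr /=.
rewrite deriv_alongM -scalerAl deriv_alongZ deriv_along_expS Lx.
rewrite -[invfact N in LHS](invfactS N) -!mul_mpolyC mpolyCM -mpolyC_nat exprS.
ring.
Qed.

End DerivAlong.

Section FirstIntegral.
Variable R : realType.
Local Notation A := (polyA R).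
Variable v : 'I_3 -> CC R.
Variables (i j k : 'I_3) (f g h : A).
Hypotheses (Hij : i != j) (Hjk : j != k) (Hki : k != i).
Hypothesis F_integrable : integrable i j k f g h.
Hypothesis h_v : h.@[v] != 0.
Local Notation M := (point_ideal v).
Local Notation M_ideal := (point_ideal_ideal v).
Local Notation P := (ideal_pow M).

(* Signs chosen so that L_i ti = L_j tj = -1, as in deriv_along_taylor. *)
Definition ti : A := - ('X_i - (v i)%:MP).
Definition tj : A := - ('X_j - (v j)%:MP).
Definition tk : A := 'X_k - (v k)%:MP.

Lemma ti_in_M : M ti.
Proof. by rewrite /point_ideal /ti mevalN mevalB mevalXU mevalC subrr oppr0. Qed.

Lemma tj_in_M : M tj.
Proof. by rewrite /point_ideal /tj mevalN mevalB mevalXU mevalC subrr oppr0. Qed.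

Lemma mderiv_ti l : ti^`M(l) = - (i == l)%:R.
Proof. by rewrite /ti mderivN mderivB mderivC subr0 mderivXU. Qed.

Lemma mderiv_tj l : tj^`M(l) = - (j == l)%:R.
Proof. by rewrite /tj mderivN mderivB mderivC subr0 mderivXU. Qed.

Lemma mderiv_tk l : tk^`M(l) = (k == l)%:R.
Proof. by rewrite /tk mderivB mderivC subr0 mderivXU. Qed.

Definition h0 : CC R := h.@[v].

Lemma h_normalized_unit : M (1 - (h0^-1)%:MP * h).
Proof. by rewrite /point_ideal mevalB meval1 mevalM mevalC mulVf ?subrr. Qed.

Definition hinv N : A := (h0^-1)%:MP * geom_inv N ((h0^-1)%:MP * h).

Lemma h_hinv N : P N (h * hinv N - 1).
Proof.
have -> : h * hinv N - 1 =
    - (1 - (h0^-1)%:MP * h * geom_inv N ((h0^-1)%:MP * h)) by rewrite /hinv; ring.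
by apply: ideal_powN; apply: ideal_pow_geom_inv; apply: h_normalized_unit.
Qed.

Lemma hinv_diff N : P N (hinv N.+1 - hinv N).
Proof.
rewrite /hinv /geom_inv big_ord_recr /= mulrDr addrAC subrr add0r.
by apply: ideal_powMl; apply: ideal_pow_exp; apply: h_normalized_unit.
Qed.

Definition alpha N := f * hinv N.
Definition beta N := g * hinv N.
Definition Li N := deriv_along i k (alpha N).
Definition Lj N := deriv_along j k (beta N).

Lemma Li_ti N : Li N ti = -1.
Proof. by rewrite /Li /deriv_along !mderiv_ti eqxx eq_sym (negbTE Hki) oppr0 mulr0 subr0. Qed.

Lemma Li_tj N : Li N tj = 0.
Proof. by rewrite /Li /deriv_along !mderiv_tj (negbTE Hjk) eq_sym (negbTE Hij) oppr0 mulr0 subr0. Qed.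

Lemma Lj_ti N : Lj N ti = 0.
Proof. by rewrite /Lj /deriv_along !mderiv_ti (negbTE Hij) eq_sym (negbTE Hki) oppr0 mulr0 subr0. Qed.

Lemma Lj_tj N : Lj N tj = -1.
Proof. by rewrite /Lj /deriv_along !mderiv_tj eqxx (negbTE Hjk) oppr0 mulr0 subr0. Qed.

(* Up to the error of hinv N as an inverse of h, h^2 curv is the
   integrability defect of F, hence small (curv_expand). *)
Definition curv N : A :=
  (beta N)^`M(i) - (alpha N)^`M(j) + beta N * (alpha N)^`M(k) - alpha N * (beta N)^`M(k).

Lemma Li_Lj_commutator N q : Lj N (Li N q) - Li N (Lj N q) = curv N * q^`M(k).
Proof.
rewrite /Li /Lj /deriv_along /curv !mderivB !mderivM.
by rewrite (mderiv_comm j i) (mderiv_comm j k) (mderiv_comm i k); ring.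
Qed.

Lemma curv_expand N : h ^+ 2 * curv N =
  (h * hinv N) * (f * (h^`M(j) - g^`M(k)) + g * (f^`M(k) - h^`M(i)) + h * (g^`M(i) - f^`M(j)))
  + (h * hinv N) * (h * hinv N - 1) * (g * f^`M(k) - f * g^`M(k))
  + g * h * (h * hinv N - 1)^`M(i) - f * h * (h * hinv N - 1)^`M(j).
Proof.
by rewrite /curv /alpha /beta !mderivB !mderivM -mpolyC1 !mderivC; ring.
Qed.

Lemma curv_small N : P N.-1 (curv N).
Proof.
case: N => [//|N] /=.
have Hd l : P N (h * hinv N.+1 - 1)^`M(l) by apply: ideal_pow_mderiv; apply: h_hinv.
have Hh1 := ideal_powSW (h_hinv N.+1).
have H2 : P N (h ^+ 2 * curv N.+1).
  rewrite curv_expand F_integrable mulr0 add0r.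
  apply: ideal_powB; last exact: ideal_powMl.
  apply: ideal_powD; last exact: ideal_powMl.
  exact: ideal_powMr (ideal_powMl _ Hh1).
have -> : curv N.+1 = hinv N.+1 ^+ 2 * (h ^+ 2 * curv N.+1)
    - curv N.+1 * (h * hinv N.+1 - 1) * (h * hinv N.+1 + 1) by ring.
apply: ideal_powB; first exact: ideal_powMl.
exact: ideal_powMr (ideal_powMl _ Hh1).
Qed.

Lemma Lj_iter_Li N m q :
  P (N.-1 - m) (Lj N (iter m (Li N) q) - iter m (Li N) (Lj N q)).
Proof.
elim: m => [|m IH]; first by rewrite /= subrr; apply: ideal_pow0.
rewrite !iterS; set x := iter m (Li N) q.
have -> : Lj N (Li N x) - Li N (iter m (Li N) (Lj N q)) =
    (Lj N (Li N x) - Li N (Lj N x)) + Li N (Lj N x - iter m (Li N) (Lj N q)).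
  by rewrite /Li (deriv_alongB _ _ _ (Lj N x)) addrA subrK.
apply: ideal_powD.
  rewrite Li_Lj_commutator; apply: (ideal_pow_leW (leq_subr _ _)).
  by apply: ideal_powMr; apply: curv_small.
by rewrite subnS -subn1; apply: deriv_along_ideal_pow.
Qed.

(* The Taylor expansion at v of the common first integral of L_i and L_j
   that restricts to x_k - v k on the line x_i = v i, x_j = v j. *)
Definition taylor_coef N m n := iter m (Li N) (iter n (Lj N) tk).
Definition taylor_term N m n :=
  (invfact R m *: ti ^+ m) * ((invfact R n *: tj ^+ n) * taylor_coef N m n).
Definition first_integral N := \sum_(m < N) \sum_(n < N) taylor_term N m n.

Lemma Li_first_integral N : P N.-1 (Li N (first_integral N)).
Proof.
case: N => [//|N] /=.
rewrite /first_integral /Li deriv_along_sum.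
under eq_bigr do rewrite deriv_along_sum.
rewrite exchange_big /=; apply: ideal_pow_sum => n _.
have -> : \sum_(m < N.+1) deriv_along i k (alpha N.+1) (taylor_term N.+1 m n) =
    (invfact R n *: tj ^+ n) * \sum_(m < N.+1)
      deriv_along i k (alpha N.+1) (invfact R m *: ti ^+ m * taylor_coef N.+1 m n).
  rewrite mulr_sumr; apply: eq_bigr => m _.
  have -> : taylor_term N.+1 m n =
      (invfact R n *: tj ^+ n) * (invfact R m *: ti ^+ m * taylor_coef N.+1 m n).
    by rewrite /taylor_term; ring.
  by rewrite deriv_alongM deriv_alongZ deriv_along_exp0 ?scaler0 ?mul0r ?add0r //; apply: Li_tj.
rewrite (deriv_along_taylor (fun m => taylor_coef N.+1 m n) N); last exact: Li_ti.
rewrite big1 ?addr0; last by move=> m _; rewrite /taylor_coef iterS subrr mulr0.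
apply: ideal_powMl; rewrite -scalerAl; apply: ideal_powZ.
by apply: ideal_powMr; apply: ideal_pow_exp; apply: ti_in_M.
Qed.

Lemma Lj_first_integral N : P N.-1 (Lj N (first_integral N)).
Proof.
case: N => [//|N] /=.
rewrite /first_integral /Lj deriv_along_sum; apply: ideal_pow_sum => m _.
have -> : \sum_(n < N.+1) taylor_term N.+1 m n = (invfact R m *: ti ^+ m) *
    \sum_(n < N.+1) (invfact R n *: tj ^+ n * taylor_coef N.+1 m n).
  by rewrite mulr_sumr; apply: eq_bigr => n _; rewrite /taylor_term mulrA.
rewrite deriv_alongM deriv_alongZ deriv_along_exp0 ?scaler0 ?mul0r ?add0r;
  last exact: Lj_ti.
rewrite deriv_along_sum (deriv_along_taylor (fun n => taylor_coef N.+1 m n) N);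
  last exact: Lj_tj.
rewrite mulrDr; apply: ideal_powD.
  apply: ideal_powMl; rewrite -scalerAl; apply: ideal_powZ.
  by apply: ideal_powMr; apply: ideal_pow_exp; apply: tj_in_M.
rewrite mulr_sumr; apply: ideal_pow_sum => n _.
have Hcomm : P (N - m)
    (deriv_along j k (beta N.+1) (taylor_coef N.+1 m n) - taylor_coef N.+1 m n.+1).
  by have := Lj_iter_Li N.+1 m (iter n (Lj N.+1) tk); rewrite /taylor_coef iterS.
rewrite -!scalerAl; apply: ideal_powZ; rewrite -scalerAr; apply: ideal_powZ.
rewrite mulrCA; apply: ideal_powMl.
apply: (ideal_pow_leW _ (ideal_powM (ideal_pow_exp m ti_in_M) Hcomm)).
by rewrite -leq_subLR leqnn.
Qed.

Lemma mderiv_mul_small (x s : A) : M x -> x^`M(k) = 0 -> P 1 (x * s)^`M(k).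
Proof.
move=> Mx Dx; rewrite mderivM Dx mul0r add0r; apply/(ideal_pow1 M_ideal).
by case: M_ideal => _ _ MM; rewrite mulrC; apply: MM.
Qed.

Lemma dk_first_integral N : P 1 ((first_integral N.+1)^`M(k) - 1).
Proof.
rewrite /first_integral big_ord_recl big_ord_recl.
have -> : taylor_term N.+1 ord0 ord0 = tk.
  by rewrite /taylor_term /taylor_coef /= !invfact0 !expr0 !scale1r !mul1r.
rewrite 2!mderivD mderiv_tk eqxx (_ : forall a b : A, true%:R + a + b - 1 = a + b);
  last by move=> a b /=; ring.
apply: ideal_powD.
  rewrite raddf_sum; apply: ideal_pow_sum => n _.
  have -> : taylor_term N.+1 ord0 (lift ord0 n) = tj * ((invfact R (lift ord0 n) *: tj ^+ n)
      * taylor_coef N.+1 0 (lift ord0 n)).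
    by rewrite /taylor_term /= invfact0 expr0 scale1r mul1r exprS scalerAr -mulrA.
  by apply: mderiv_mul_small; [apply: tj_in_M | rewrite mderiv_tj (negbTE Hjk) oppr0].
rewrite raddf_sum; apply: ideal_pow_sum => m _.
rewrite raddf_sum; apply: ideal_pow_sum => n _.
have -> : taylor_term N.+1 (lift ord0 m) n = ti * ((invfact R (lift ord0 m) *: ti ^+ m)
    * ((invfact R n *: tj ^+ n) * taylor_coef N.+1 (lift ord0 m) n)).
  by rewrite /taylor_term /= exprS scalerAr -mulrA.
by apply: mderiv_mul_small; [apply: ti_in_M | rewrite mderiv_ti eq_sym (negbTE Hki) oppr0].
Qed.

Lemma iter_deriv_along_diff l (a a' : A) N s q q' t :
    P N (a' - a) -> (s <= N)%N -> P s (q' - q) ->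
  P (s - t) (iter t (deriv_along l k a') q' - iter t (deriv_along l k a) q).
Proof.
move=> Ha Hs Hq; elim: t => [|t IH]; first by rewrite subn0.
rewrite !iterS; set x' := iter t _ q'; set x := iter t _ q.
have -> : deriv_along l k a' x' - deriv_along l k a x =
    (deriv_along l k a' x' - deriv_along l k a x') + deriv_along l k a (x' - x).
  by rewrite deriv_alongB addrA subrK.
have -> : deriv_along l k a' x' - deriv_along l k a x' = - ((a' - a) * x'^`M(k)).
  by rewrite /deriv_along; ring.
apply: ideal_powD; last by rewrite subnS -subn1; apply: deriv_along_ideal_pow.
apply: ideal_powN; apply: ideal_powMr; apply: (ideal_pow_leW _ Ha).
exact: leq_trans (leq_subr _ _) Hs.
Qed.

Lemma taylor_coef_diff N m n : P (N - n - m) (taylor_coef N.+1 m n - taylor_coef N m n).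
Proof.
have Ha : P N (alpha N.+1 - alpha N).
  by rewrite /alpha -mulrBr; apply: ideal_powMl; apply: hinv_diff.
have Hb : P N (beta N.+1 - beta N).
  by rewrite /beta -mulrBr; apply: ideal_powMl; apply: hinv_diff.
apply: iter_deriv_along_diff Ha (leq_subr _ _) _.
apply: iter_deriv_along_diff Hb (leqnn N) _.
by rewrite subrr; apply: ideal_pow0.
Qed.

Lemma first_integral_diff N : P N (first_integral N.+1 - first_integral N).
Proof.
have -> : first_integral N.+1 - first_integral N =
    \sum_(m < N) \sum_(n < N) (taylor_term N.+1 m n - taylor_term N m n) +
    \sum_(m < N) taylor_term N.+1 m N + \sum_(n < N.+1) taylor_term N.+1 N n.
  rewrite /first_integral big_ord_recr /=.
  under eq_bigr do rewrite big_ord_recr /=.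
  rewrite big_split /=.
  under [X in _ = X + _ + _]eq_bigr do rewrite sumrB.
  have regroup (a b c d : A) : a + b + c - d = a - d + b + c by ring.
  by rewrite sumrB regroup.
apply: ideal_powD; first apply: ideal_powD.
- apply: ideal_pow_sum => m _; apply: ideal_pow_sum => n _.
  rewrite /taylor_term -mulrBr -mulrBr mulrA -!scalerAl -scalerAr -scalerAl.
  do 2 apply: ideal_powZ.
  apply: (ideal_pow_leW _ (ideal_powM (ideal_powM
    (ideal_pow_exp m ti_in_M) (ideal_pow_exp n tj_in_M)) (taylor_coef_diff N m n))).
  by rewrite -subnDA -leq_subLR addnC leqnn.
- apply: ideal_pow_sum => m _; rewrite /taylor_term mulrCA -!scalerAl.
  apply: ideal_powZ; apply: ideal_powMr; apply: ideal_pow_exp.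
  exact: tj_in_M.
- apply: ideal_pow_sum => n _; rewrite /taylor_term -!scalerAl.
  apply: ideal_powZ; apply: ideal_powMr; apply: ideal_pow_exp.
  exact: ti_in_M.
Qed.

Lemma dk_first_integral_geom_inv n N :
  P n (1 - (first_integral N.+1)^`M(k) * geom_inv n (first_integral N.+1)^`M(k)).
Proof.
apply: ideal_pow_geom_inv.
have /(ideal_pow1 M_ideal) dk1 := dk_first_integral N.
by rewrite -opprB /point_ideal mevalN dk1 oppr0.
Qed.

Definition multiplier n : A :=
  h * geom_inv n (first_integral n.+1)^`M(k).

Lemma multiplier_diff n : P n (multiplier n.+1 - multiplier n).
Proof.
rewrite /multiplier -mulrBr; apply: ideal_powMl.
set u' := (first_integral n.+2)^`M(k); set u := (first_integral n.+1)^`M(k).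
set S' := geom_inv n.+1 u'; set S := geom_inv n u.
have -> : S' - S = S' * (1 - u * S) + S * S' * (u - u') - S * (1 - u' * S') by ring.
apply: ideal_powB; first apply: ideal_powD.
- by apply: ideal_powMl; apply: dk_first_integral_geom_inv.
- apply: ideal_powMl; rewrite -opprB -mderivB; apply: ideal_powN.
  by apply: ideal_pow_mderiv; apply: first_integral_diff.
- by apply: ideal_powMl; apply: ideal_powSW; apply: dk_first_integral_geom_inv.
Qed.

Lemma multiplier_mderiv_i n :
  P n (f - multiplier n * (first_integral n.+1)^`M(i)).
Proof.
set u := (first_integral n.+1)^`M(k); set S := geom_inv n u.
have HL := Li_first_integral n.+1; rewrite /= in HL.
have -> : f - multiplier n * (first_integral n.+1)^`M(i) =
    f * (1 - u * S) - S * (h * Li n.+1 (first_integral n.+1) + (h * hinv n.+1 - 1) * f * u).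
  by rewrite /multiplier /Li /deriv_along /alpha -/u -/S; ring.
apply: ideal_powB; first by apply: ideal_powMl; apply: dk_first_integral_geom_inv.
apply: ideal_powMl; apply: ideal_powD; first exact: ideal_powMl.
by do 2 apply: ideal_powMr; apply: ideal_powSW; apply: h_hinv.
Qed.

Lemma multiplier_mderiv_j n :
  P n (g - multiplier n * (first_integral n.+1)^`M(j)).
Proof.
set u := (first_integral n.+1)^`M(k); set S := geom_inv n u.
have HL := Lj_first_integral n.+1; rewrite /= in HL.
have -> : g - multiplier n * (first_integral n.+1)^`M(j) =
    g * (1 - u * S) - S * (h * Lj n.+1 (first_integral n.+1) + (h * hinv n.+1 - 1) * g * u).
  by rewrite /multiplier /Lj /deriv_along /beta -/u -/S; ring.
apply: ideal_powB; first by apply: ideal_powMl; apply: dk_first_integral_geom_inv.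
apply: ideal_powMl; apply: ideal_powD; first exact: ideal_powMl.
by do 2 apply: ideal_powMr; apply: ideal_powSW; apply: h_hinv.
Qed.

Lemma multiplier_mderiv_k n :
  P n (h - multiplier n * (first_integral n.+1)^`M(k)).
Proof.
have -> : h - multiplier n * (first_integral n.+1)^`M(k) =
    h * (1 - (first_integral n.+1)^`M(k) * geom_inv n (first_integral n.+1)^`M(k)).
  by rewrite /multiplier; ring.
by apply: ideal_powMl; apply: dk_first_integral_geom_inv.
Qed.

End FirstIntegral.

Section GradExact.
Variable R : realType.
Local Notation A := (polyA R).

Definition grad_exact (M : A -> Prop) (i j k : 'I_3) (f g h : A) : Prop :=
  exists a b : nat -> A, [/\ compl_elt M a, compl_elt M b,
    compl_eq M (compl_of f) (compl_mul b (compl_deriv i a)),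
    compl_eq M (compl_of g) (compl_mul b (compl_deriv j a)) &
    compl_eq M (compl_of h) (compl_mul b (compl_deriv k a))].

Lemma grad_exact_rot M i j k f g h :
  grad_exact M i j k f g h -> grad_exact M k i j h f g.
Proof. by case=> a [b [? ? ? ? ?]]; exists a, b. Qed.

Lemma grad_exact0 M i j k : grad_exact M i j k 0 0 0.
Proof.
exists (fun=> 0), (fun=> 0).
by split=> n; rewrite /compl_of /compl_mul ?mul0r subrr; apply: ideal_pow0.
Qed.

Lemma integrable_grad_exact i j k f g h :
  integrable i j k f g h -> h != 0 -> i != j -> j != k -> k != i ->
  exists2 M, is_maximal_ideal M & grad_exact M i j k f g h.
Proof.
move=> F_int h_neq0 Hij Hjk Hki; have [v h_v] := mpoly_nonvanishing_point h_neq0.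
exists (point_ideal v); first exact: point_ideal_maximal.
exists (first_integral v i j k f g h), (multiplier v i j k f g h).
split=> n; [exact: first_integral_diff | exact: multiplier_diff
  | exact: multiplier_mderiv_i | exact: multiplier_mderiv_j | exact: multiplier_mderiv_k].
Qed.

End GradExact.

Theorem theorem2p4 (R : realType) (f g h : polyA R) :
  poisson_triple f g h -> cm_exact f g h.
Proof.
move=> /poisson_triple_integrable F_int.
have G_int := integrable_rot F_int; have H_int := integrable_rot G_int.
suff [M M_max F_exact] : exists2 M, is_maximal_ideal M & grad_exact M 0 1 2 f g h.
  by exists M.
have [h0|h_neq0] := eqVneq h 0; last exact: integrable_grad_exact F_int h_neq0 isT isT isT.
have [f0|f_neq0] := eqVneq f 0.
  have [g0|g_neq0] := eqVneq g 0.
    exists (point_ideal (fun=> 0)); first exact: point_ideal_maximal.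
    by rewrite f0 g0 h0; apply: grad_exact0.
  have [M M_max /grad_exact_rot /grad_exact_rot] := integrable_grad_exact H_int g_neq0 isT isT isT.
  by exists M.
have [M M_max /grad_exact_rot] := integrable_grad_exact G_int f_neq0 isT isT isT.
by exists M.
Qed.
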